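(* Let $p:E\to B$ be a surjective morphism in $\mathbf{CLS}$ and $E'$ a closure space with the same underlying set as $E$ such that $1_E:E'\to E$ is a morphism in $\mathbf{CLS}$ and the first projection $\pi_1:E\times_BE'\to E'$, $(e,e')\mapsto e$, is a morphism in $\mathbf{CLS}$ (where $E\times_BE'$ is the pullback in $\mathbf{CLS}$ of $p$ and $p:E'\to B$). Write $p'$ for the map $p$ regarded as a morphism $E'\to B$. If both $p$ and $p'$ are regular epimorphisms in $\mathbf{CLS}$, then for every $Y\in\mathcal{C}_{E'}\setminus\mathcal{C}_E$ there exists $Y^*\in\mathcal{C}_{E'}\setminus\mathcal{C}_E$ with $Y\subsetneq Y^*$. In particular, if $\mathcal{C}_{E'}\neq\mathcal{C}_E$, then $E$ is infinite.
   Context: A closure space is a pair $(A,\mathcal{C}_A)$ where $A$ is a set and $\mathcal{C}_A$ is a set of subsets of $A$ closed under arbitrary intersections (so $A\in\mathcal{C}_A$); elements of $\mathcal{C}_A$ are called closed. The category $\mathbf{CLS}$ has closure spaces as objects and, as morphisms $\alpha:A\to B$, maps with $\alpha^{-1}(B')\in\mathcal{C}_A$ for all $B'\in\mathcal{C}_B$. Pullbacks in $\mathbf{CLS}$ are set-theoretic pullbacks with closed sets $\pi_1^{-1}(E_0)\cap\pi_2^{-1}(A_0)$ for $E_0,A_0$ closed in the factors. A morphism $q:E\to B$ in $\mathbf{CLS}$ is a regular epimorphism iff it is surjective and $\mathcal{C}_B=\{X\subseteq B\mid q^{-1}(X)\in\mathcal{C}_E\}$. *)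

From mathcomp Require Import all_boot.
From mathcomp Require Import boolp classical_sets cardinality.
Set Implicit Arguments.
Unset Strict Implicit.
Unset Printing Implicit Defensive.
Local Open Scope classical_set_scope.

(* A closure system on T: closed under arbitrary intersections
   (the empty intersection gives the whole set). *)
Definition closure_system (T : Type) (C : set (set T)) : Prop :=
  forall F : set (set T), F `<=` C -> C (\bigcap_(X in F) X).

Definition cls_morphism (A B : Type) (CA : set (set A)) (CB : set (set B))
  (f : A -> B) : Prop :=
  forall X, CB X -> CA (f @^-1` X).

(* Regular epimorphisms in CLS: surjective, and B carries the quotient closure. *)
Definition cls_regular_epi (A B : Type) (CA : set (set A)) (CB : set (set B))
  (q : A -> B) : Prop :=
  (forall b, exists a, q a = b) /\ CB = [set X | CA (q @^-1` X)].

Definition pb_carrier (A A' C : Type) (f : A -> C) (g : A' -> C) : Type :=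
  {z : A * A' | f z.1 = g z.2}.

Definition pb_closed (A A' C : Type) (CA : set (set A)) (CA' : set (set A'))
  (f : A -> C) (g : A' -> C) : set (set (pb_carrier f g)) :=
  [set S | exists X0 X1, CA X0 /\ CA' X1 /\
     S = [set z : pb_carrier f g | X0 (sval z).1 /\ X1 (sval z).2]].

Definition pb_pr1 (A A' C : Type) (f : A -> C) (g : A' -> C)
  (z : pb_carrier f g) : A := (sval z).1.
Arguments pb_closed {A A' C} CA CA' f g.
Arguments pb_pr1 {A A' C} f g z.

From mathcomp Require Import all_boot.
From mathcomp Require Import boolp classical_sets cardinality.
From mathcomp Require Import functions.
Local Open Scope classical_set_scope.

(* Proof of Lemma 4.2.  Let Y be closed in E' but not in E.  Because the
   first projection of the pullback E x_B E' into E' is a morphism, the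
   preimage of Y is a basic closed set of the pullback: there are X0 closed
   in E and X1 closed in E' with  Y e <-> X0 e /\ X1 e'  whenever p e = p e'.
   Taking e' = e gives Y = X0 `&` X1, so X1 is not closed in E (otherwise Y
   would be an intersection of two E-closed sets), and Y is contained in X1.
   The inclusion is strict: if Y = X1, then Y is saturated for p, hence Y is
   the preimage of p(Y); since p : E' -> B is a quotient, p(Y) is closed in B,
   and since p : E -> B is a morphism, Y would be closed in E.
   The second part is general: a nonempty family of subsets of T in which
   every member has a strictly larger member yields a strictly increasing
   chain of subsets, and picking a new point at each step injects nat into T. *)

Lemma closure_systemI (T : Type) (C : set (set T)) (X Y : set T) :
  closure_system C -> C X -> C Y -> C (X `&` Y).
Proof.
move=> clC CX CY.
have -> : X `&` Y = \bigcap_(Z in [set Z | Z = X \/ Z = Y]) Z.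
  apply/seteqP; split => [e [Xe Ye] Z [->|->] //|e He].
  by split; apply: He; [left|right].
by apply: clC => Z [->|->].
Qed.

(* Over a quotient closure space, a closed set that is saturated for the
   quotient map is the preimage of a closed set, hence closed for any
   structure making the map a morphism. *)
Lemma saturated_closed (A B : Type) (CA CA' : set (set A)) (CB : set (set B))
    (q : A -> B) (Y : set A) :
  cls_morphism CA CB q -> cls_regular_epi CA' CB q -> CA' Y ->
  (forall a a', Y a -> q a = q a' -> Y a') -> CA Y.
Proof.
move=> mq [_ quotB] CY satY.
have preimY : q @^-1` (q @` Y) = Y.
  apply/seteqP; split => [a [y Yy qy]|a Ya]; last by exists a.
  exact: satY Yy qy.
have CBqY : CB (q @` Y) by rewrite quotB /= preimY.
by have := mq _ CBqY; rewrite preimY.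
Qed.

Section PullbackProjection.
Variables (E B : Type) (CE CE' : set (set E)) (CB : set (set B)) (p : E -> B).
Hypothesis pr1_morphism : cls_morphism (pb_closed CE CE' p p) CE' (pb_pr1 p p).

Lemma pullback_pr1_closed (Y : set E) :
  CE' Y ->
  exists X0 X1, [/\ CE X0, CE' X1 &
    forall e e', p e = p e' -> (Y e <-> X0 e /\ X1 e')].
Proof.
move=> CY; have [X0 [X1 [CX0 [CX1 preimY]]]] := pr1_morphism Y CY.
exists X0, X1; split => // e e' pee'.
have := congr1 (fun S => S (exist _ (e, e') pee')) preimY.
by rewrite /= /pb_pr1 /= => ->.
Qed.

Lemma strict_superset_closed (Y : set E) :
  closure_system CE -> cls_morphism CE CB p ->
  cls_regular_epi CE' CB p -> CE' Y -> ~ CE Y ->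
  exists Ys, CE' Ys /\ ~ CE Ys /\ Y `<` Ys.
Proof.
move=> clE mp quot' CY nCY.
have [X0 [X1 [CX0 CX1 descY]]] := pullback_pr1_closed Y CY.
have Y_sub_X1 : Y `<=` X1 by move=> e /(descY e e erefl) [].
have Y_eq : Y = X0 `&` X1.
  by apply/seteqP; split => e /(descY e e erefl).
exists X1; split => //; split.
  by move=> CEX1; apply: nCY; rewrite Y_eq; apply: closure_systemI.
split => // X1_sub_Y; apply: nCY.
apply: (@saturated_closed E B CE CE' CB p Y mp quot' CY) => e e' Ye pee'.
by apply: X1_sub_Y; have [] := (descY e e' pee').1 Ye.
Qed.

End PullbackProjection.

Lemma strict_chain_injective (T : Type) (f : nat -> set T) (x : nat -> T) :
  (forall n, f n `<=` f n.+1) -> (forall n, f n.+1 (x n) /\ ~ f n (x n)) ->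
  injective x.
Proof.
move=> incr new.
have mono n m : (n <= m)%N -> f n `<=` f m.
  move=> /subnK <-; elim: (m - n)%N => [|k IH] //.
  by rewrite addSn; apply: subset_trans IH (incr _).
suff lt_neq n m : (n < m)%N -> x n <> x m.
  move=> n m xnm; case: (ltngtP n m) => [/lt_neq|/lt_neq|//] //.
  by move=> /(_ (esym xnm)).
move=> nm xnm; apply: (new m).2; rewrite -xnm.
exact: mono nm _ (new n).1.
Qed.

Lemma no_maximal_infinite (T : Type) (P : set (set T)) :
  P !=set0 -> (forall Y, P Y -> exists Ys, P Ys /\ Y `<` Ys) ->
  infinite_set [set: T].
Proof.
move=> [Y0 PY0] grow.
have step Y : exists Ys, P Y -> P Ys /\ Y `<` Ys.
  case: (pselect (P Y)) => [/grow [Ys HYs]|nPY]; first by exists Ys.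
  by exists Y.
have [next Hnext] := choice step.
pose f n := iter n next Y0.
have Pf n : P (f n) by elim: n => //= n /Hnext [].
have f_strict n : f n `<` f n.+1 by have [] := Hnext _ (Pf n).
have fresh n : exists a, f n.+1 a /\ ~ f n a.
  have [_ nsub] := f_strict n.
  apply: contrapT => nex; apply: nsub => a fna.
  by apply: contrapT => nfa; apply: nex; exists a.
have [x Hx] := choice fresh.
apply/infiniteP; have [g] : $|{injfun [set: nat] >-> [set: T]}|.
  apply/injfunPex; exists x => // n m _ _.
  exact: (@strict_chain_injective T f x (fun n => (f_strict n).1) Hx).
exact: inj_card_le g.
Qed.

Theorem lemma4p2 (E B : Type) (CE CE' : set (set E)) (CB : set (set B))
  (p : E -> B) :
  closure_system CE -> closure_system CE' -> closure_system CB ->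
  cls_morphism CE CB p ->
  (forall b, exists e, p e = b) ->
  cls_morphism CE' CE id ->
  cls_morphism (pb_closed CE CE' p p) CE' (pb_pr1 p p) ->
  cls_regular_epi CE CB p ->
  cls_regular_epi CE' CB p ->
  (forall Y, CE' Y -> ~ CE Y ->
     exists Ys, CE' Ys /\ ~ CE Ys /\ Y `<` Ys) /\
  (CE' <> CE -> infinite_set [set: E]).
Proof.
move=> clE _ _ mp _ mid mpr _ quot'.
have grow Y : CE' Y -> ~ CE Y -> exists Ys, CE' Ys /\ ~ CE Ys /\ Y `<` Ys.
  exact: (@strict_superset_closed E B CE CE' CB p mpr Y clE mp quot').
split => // neq.
have new_closed : exists Y, CE' Y /\ ~ CE Y.
  apply: contrapT => nex; apply: neq; apply/funext => X; apply/propext.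
  split => [CX|]; last exact: mid.
  by apply: contrapT => nCX; apply: nex; exists X.
apply: (@no_maximal_infinite E [set Y | CE' Y /\ ~ CE Y]) => //.
by move=> Y [CY nCY]; have [Ys [? [? ?]]] := grow Y CY nCY; exists Ys.
Qed.
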